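(* Let $m,n,k$ be positive integers, $A\in\mathbb{R}^{m\times n}$, $x^*\in\mathbb{R}^n$ with support $S^*=\{i: x^*_i\neq 0\}$ satisfying $1\le |S^*|\le k$, $e\in\mathbb{R}^m$ and $y=Ax^*+e$. Assume $A$ satisfies the $(2k+1)$-RIP, that $\|A_i\|_2=1$ for every column $A_i$ of $A$, and that $$\gamma_k^{RIP}\|e\|_2<\frac{\min_{i\in S^*}|x^*_i|}{2k}-\alpha_k^{RIP}\|x^*\|_2 .$$ Then for every initialization $\mathcal{X}^0\in\mathbb{R}^n$ and every step size $\eta>0$, the sets $S^t$ generated by SEA satisfy: there exists an integer $t_s\le T_{RIP}$ with $S^*\subseteq S^{t_s}$, where $$T_{RIP}=\frac{2k\frac{\|\mathcal{X}^0\|_\infty}{\eta}+(k+1)\min_{i\in S^*}|x^*_i|}{\min_{i\in S^*}|x^*_i|-2k\left(\alpha_k^{RIP}\|x^*\|_2+\gamma_k^{RIP}\|e\|_2\right)}.$$ If moreover $\min_{i\in S^*}|x^*_i|>\frac{2}{\sqrt{1-\delta_{2k}}}\|e\|_2$ and SEA is run for $N>T_{RIP}$ iterations, then $S^*\subseteq S^{t_{BEST}}$ and $\|x^{t_{BEST}}-x^*\|_2\le\frac{2}{\sqrt{1-\delta_k}}\|e\|_2$.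
   Context: For $l\in\{1,\dots,n\}$, the restricted isometry constant $\delta_l$ of $A$ is the smallest $\delta\ge0$ such that $(1-\delta)\|x\|_2^2\le\|Ax\|_2^2\le(1+\delta)\|x\|_2^2$ for all $x\in\mathbb{R}^n$ with at most $l$ nonzero entries; $A$ satisfies the $l$-RIP if $\delta_l<1$. Define $\alpha_k^{RIP}=\delta_{2k+1}\left(1+\frac{\delta_{2k}}{1-\delta_k}\right)$ and $\gamma_k^{RIP}=1+\frac{\delta_{2k+1}\sqrt{1+\delta_k}}{1-\delta_k}$. For $v\in\mathbb{R}^n$, $\mathrm{largest}_k(v)$ is the set of indices of the $k$ entries of $v$ with largest absolute value (ties broken by selecting the highest indices). For $S\subseteq\{1,\dots,n\}$, $A_S$ is the submatrix of $A$ formed by the columns indexed by $S$, $v_S$ the restriction of a vector $v$ to $S$, and $A_S^\dagger$ the Moore–Penrose pseudoinverse of $A_S$. The Support Exploration Algorithm (SEA) with initialization $\mathcal{X}^0$ and step size $\eta>0$ generates, for $t=0,1,2,\dots$: $S^t=\mathrm{largest}_k(\mathcal{X}^t)$; $x^t\in\mathbb{R}^n$ with $x^t_i=0$ for $i\notin S^t$ and $x^t_{S^t}=A_{S^t}^\dagger y$; $\mathcal{X}^{t+1}=\mathcal{X}^t-\eta A^T(Ax^t-y)$. When SEA is run for $N$ iterations (computing $x^0,\dots,x^{N-1}$), it outputs $x^{t_{BEST}}$ where $t_{BEST}\in\arg\min_{t'\in\{0,\dots,N-1\}}\|Ax^{t'}-y\|_2$. *)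

From HB Require Import structures.
From mathcomp Require Import all_boot all_order all_algebra.
From mathcomp Require Import all_classical all_reals.
Set Implicit Arguments. Unset Strict Implicit. Unset Printing Implicit Defensive.
Import Order.TTheory GRing.Theory Num.Theory.
Local Open Scope ring_scope.
Local Open Scope classical_set_scope.

Section SEA.
Variable R : realType.

Definition norm2 {n : nat} (v : 'cV[R]_n) : R := Num.sqrt (\sum_i (v i 0) ^+ 2).

Definition norminf {n : nat} (v : 'cV[R]_n) : R := \big[Num.max/0]_i `|v i 0|.

Definition supp {n : nat} (v : 'cV[R]_n) : {set 'I_n} := [set i | v i 0 != 0].

Definition sparse {n : nat} (l : nat) (v : 'cV[R]_n) : Prop := (#|supp v| <= l)%N.

(* restricted isometry constant delta_l: the smallest delta >= 0 such that
   (1-delta)|x|^2 <= |Ax|^2 <= (1+delta)|x|^2 for all l-sparse x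
   (the admissible set is closed and bounded below, so its infimum is its min) *)
Definition rip_const {m n : nat} (A : 'M[R]_(m, n)) (l : nat) : R :=
  inf [set d : R | 0 <= d /\ forall x : 'cV[R]_n, sparse l x ->
        (1 - d) * norm2 x ^+ 2 <= norm2 (A *m x) ^+ 2 <= (1 + d) * norm2 x ^+ 2].

Definition alphaRIP {m n : nat} (A : 'M[R]_(m, n)) (k : nat) : R :=
  rip_const A (2 * k).+1 * (1 + rip_const A (2 * k) / (1 - rip_const A k)).

Definition gammaRIP {m n : nat} (A : 'M[R]_(m, n)) (k : nat) : R :=
  1 + rip_const A (2 * k).+1 * Num.sqrt (1 + rip_const A k) / (1 - rip_const A k).

Definition min_abs_supp {n : nat} (v : 'cV[R]_n) : R :=
  inf [set `|v i 0| | i in [set i | i \in supp v]].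

(* ordering used by largest_k: j ranks strictly above i when |v_j| > |v_i|,
   or |v_j| = |v_i| and j > i (ties broken by selecting the highest indices) *)
Definition ranks_above {n : nat} (v : 'cV[R]_n) (j i : 'I_n) : bool :=
  (`|v i 0| < `|v j 0|) || ((`|v j 0| == `|v i 0|) && (i < j)%N).

Definition largest {n : nat} (k : nat) (v : 'cV[R]_n) : {set 'I_n} :=
  [set i | (#|[set j | ranks_above v j i]| < k)%N].

Definition penrose {p q : nat} (M : 'M[R]_(p, q)) (B : 'M[R]_(q, p)) : Prop :=
  [/\ M *m B *m M = M, B *m M *m B = B,
      (M *m B)^T = M *m B & (B *m M)^T = B *m M].

Definition mp_pinv {p q : nat} (M : 'M[R]_(p, q)) : 'M[R]_(q, p) :=
  xget 0 [set B | penrose M B].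

(* A_S : the columns of A indexed by S (in increasing order) *)
Definition colS {m n : nat} (A : 'M[R]_(m, n)) (S : {set 'I_n}) : 'M[R]_(m, #|S|) :=
  \matrix_(i, j) A i (enum_val j).

(* x with x_S = A_S^dagger y and x_i = 0 off S *)
Definition sea_est {m n : nat} (A : 'M[R]_(m, n)) (y : 'cV[R]_m) (S : {set 'I_n})
  : 'cV[R]_n :=
  let z := mp_pinv (colS A S) *m y in
  \col_i (\sum_(j < #|S|) if enum_val j == i then z j 0 else 0).

Fixpoint sea_X {m n : nat} (A : 'M[R]_(m, n)) (y : 'cV[R]_m) (k : nat) (eta : R)
   (X0 : 'cV[R]_n) (t : nat) : 'cV[R]_n :=
  match t with
  | 0 => X0
  | t'.+1 =>
    let Xt := sea_X A y k eta X0 t' in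
    Xt - eta *: (A^T *m (A *m sea_est A y (largest k Xt) - y))
  end.

Definition sea_S {m n : nat} (A : 'M[R]_(m, n)) (y : 'cV[R]_m) (k : nat) (eta : R)
   (X0 : 'cV[R]_n) (t : nat) : {set 'I_n} :=
  largest k (sea_X A y k eta X0 t).

Definition sea_x {m n : nat} (A : 'M[R]_(m, n)) (y : 'cV[R]_m) (k : nat) (eta : R)
   (X0 : 'cV[R]_n) (t : nat) : 'cV[R]_n :=
  sea_est A y (sea_S A y k eta X0 t).

Definition is_tbest {m n : nat} (A : 'M[R]_(m, n)) (y : 'cV[R]_m) (k : nat) (eta : R)
   (X0 : 'cV[R]_n) (N tb : nat) : Prop :=
  (tb < N)%N /\ forall t', (t' < N)%N ->
    norm2 (A *m sea_x A y k eta X0 tb - y) <= norm2 (A *m sea_x A y k eta X0 t' - y).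

End SEA.

(* After each step, x^t is a least-squares fit on S^t, so the gradient
   g = A^T (A x^t - y) vanishes on S^t, while off S^t the RIP bounds
   |g_i + x*_i| by c = alpha |x*| + gamma |e|.  Hence X_j drifts by at most
   eta c per step for j outside S*, whereas a coordinate i of S* missed by S^t
   advances by at least eta (min |x*_i| - c) in the direction of sign x*_i;
   being missed, it is dominated by a coordinate outside S*.  If S* is not
   covered during the first L steps, some i in S* is missed at least L / k
   times, which forces L <= T_RIP.  Once S* is covered at time t_s the residual
   is at most |e|, hence so is the residual at t_BEST, and the RIP applied to
   the 2k- and k-sparse error x^(t_BEST) - x* yields support recovery and the
   error bound. *)

From HB Require Import structures.
From mathcomp Require Import all_boot all_order all_algebra.
From mathcomp Require Import all_classical all_reals.
From mathcomp Require Import ring lra zify.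
Import Order.TTheory GRing.Theory Num.Theory.
Set Implicit Arguments. Unset Strict Implicit. Unset Printing Implicit Defensive.
Local Open Scope ring_scope.

Section Dot.
Variables (R : realFieldType) (p : nat).
Implicit Types u v w : 'cV[R]_p.

Definition dot u v : R := \sum_i u i 0 * v i 0.

Lemma dotC u v : dot u v = dot v u.
Proof. by apply: eq_bigr => i _; rewrite mulrC. Qed.

Lemma dotDl u v w : dot (u + v) w = dot u w + dot v w.
Proof. by rewrite /dot -big_split; apply: eq_bigr => i _; rewrite !mxE mulrDl. Qed.

Lemma dotZl a u v : dot (a *: u) v = a * dot u v.
Proof. by rewrite /dot mulr_sumr; apply: eq_bigr => i _; rewrite !mxE mulrA. Qed.

Lemma dotNl u v : dot (- u) v = - dot u v.
Proof. by rewrite -scaleN1r dotZl mulN1r. Qed.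

Lemma dotBl u v w : dot (u - v) w = dot u w - dot v w.
Proof. by rewrite dotDl dotNl. Qed.

Lemma dotDr u v w : dot u (v + w) = dot u v + dot u w.
Proof. by rewrite dotC dotDl !(dotC u). Qed.

Lemma dotZr a u v : dot u (a *: v) = a * dot u v.
Proof. by rewrite dotC dotZl dotC. Qed.

Lemma dotNr u v : dot u (- v) = - dot u v.
Proof. by rewrite dotC dotNl dotC. Qed.

Lemma dotBr u v w : dot u (v - w) = dot u v - dot u w.
Proof. by rewrite dotDr dotNr. Qed.

Lemma dot0l v : dot 0 v = 0.
Proof. by rewrite /dot big1 // => i _; rewrite mxE mul0r. Qed.

Lemma dot0r v : dot v 0 = 0.
Proof. by rewrite dotC dot0l. Qed.

Lemma dot_sqrD u v : dot (u + v) (u + v) = dot u u + 2 * dot u v + dot v v.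
Proof. by rewrite dotDl !dotDr (dotC v u); ring. Qed.

Lemma dot_supp_eq0 u v : (forall i, u i 0 != 0 -> v i 0 = 0) -> dot u v = 0.
Proof.
move=> uv; rewrite /dot big1 // => i _.
by have [->|/uv->] := eqVneq (u i 0) 0; rewrite ?mul0r ?mulr0.
Qed.

Lemma dot_self_ge0 u : 0 <= dot u u.
Proof. by apply: sumr_ge0 => i _; rewrite -expr2 sqr_ge0. Qed.

Lemma dot_self_eq0 u : dot u u = 0 -> u = 0.
Proof.
move=> u0; apply/matrixP => i j; rewrite ord1 mxE.
have sq0 : \sum_l u l 0 ^+ 2 = 0.
  by rewrite -[RHS]u0; apply: eq_bigr => l _; rewrite expr2.
apply/eqP; rewrite -sqrf_eq0; apply/eqP.
exact: (psumr_eq0P (fun l _ => sqr_ge0 (u l 0)) sq0).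
Qed.

(* Cauchy--Schwarz: expand 0 <= |a u - v|^2 at a = <u, v> / <u, u>. *)
Lemma sqr_dot_le u v : dot u v ^+ 2 <= dot u u * dot v v.
Proof.
have [/dot_self_eq0->|uu0] := eqVneq (dot u u) 0; first by rewrite !dot0l expr0n mul0r.
have uu_gt0 : 0 < dot u u by rewrite lt_def uu0 dot_self_ge0.
have := dot_self_ge0 ((dot u v / dot u u) *: u - v).
rewrite !(dotBl, dotBr, dotZl, dotZr) (dotC v u).
set a := dot u v / dot u u.
have a_uu : a * dot u u = dot u v by rewrite divfK.
rewrite a_uu subrr mulr0 sub0r opprB subr_ge0 /a mulrAC ler_pdivrMr //.
by rewrite expr2 [dot u u * _]mulrC.
Qed.

End Dot.

Lemma dot_mulmxl (R : realFieldType) p q (B : 'M[R]_(q, p)) (u : 'cV[R]_p)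
    (z : 'cV[R]_q) :
  dot (B *m u) z = dot u (B^T *m z).
Proof.
rewrite /dot; under eq_bigr => a _ do rewrite mxE big_distrl.
rewrite exchange_big /=; apply: eq_bigr => j _; rewrite mxE big_distrr /=.
by apply: eq_bigr => a _; rewrite !mxE; ring.
Qed.

Lemma trmx_mul_entry (R : realFieldType) m n (A : 'M[R]_(m, n)) (w : 'cV[R]_m) i :
  (A^T *m w) i 0 = dot (col i A) w.
Proof. by rewrite !mxE; apply: eq_bigr => a _; rewrite !mxE. Qed.

Section Norm2.
Variables (R : realType) (p : nat).
Implicit Types u v : 'cV[R]_p.

Lemma norm2E v : norm2 v = Num.sqrt (dot v v).
Proof. by congr Num.sqrt; apply: eq_bigr => i _; rewrite expr2. Qed.

Lemma norm2_ge0 v : 0 <= norm2 v.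
Proof. exact: sqrtr_ge0. Qed.

Lemma sqr_norm2 v : norm2 v ^+ 2 = dot v v.
Proof. by rewrite norm2E sqr_sqrtr // dot_self_ge0. Qed.

Lemma norm2_gt0 v : (0 < norm2 v) = (v != 0).
Proof.
rewrite norm2E sqrtr_gt0 lt_def dot_self_ge0 andbT.
by apply/idP/idP; apply: contra_neq; [move=> ->; rewrite dot0l | exact: dot_self_eq0].
Qed.

Lemma ler_norm2 u v : (norm2 u <= norm2 v) = (dot u u <= dot v v).
Proof. by rewrite !norm2E ler_sqrt // dot_self_ge0. Qed.

Lemma norm2N v : norm2 (- v) = norm2 v.
Proof. by rewrite !norm2E dotNl dotNr opprK. Qed.

Lemma normr_dot_le u v : `|dot u v| <= norm2 u * norm2 v.
Proof.
rewrite -sqrtr_sqr !norm2E -sqrtrM ?dot_self_ge0 // ler_sqrt ?sqr_dot_le //.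
by rewrite mulr_ge0 ?dot_self_ge0.
Qed.

Lemma norm2D_le u v : norm2 (u + v) <= norm2 u + norm2 v.
Proof.
have uv0 : 0 <= norm2 u + norm2 v by rewrite addr_ge0 ?norm2_ge0.
rewrite -(ger0_norm uv0) -sqrtr_sqr norm2E ler_sqrt ?sqr_ge0 // dot_sqrD.
have := ler_norm (dot u v); have := normr_dot_le u v.
rewrite -!sqr_norm2; set a := norm2 u; set b := norm2 v; set c := dot u v.
have -> : (a + b) ^+ 2 = a ^+ 2 + 2 * (a * b) + b ^+ 2 by ring.
lra.
Qed.

Lemma norm2B_le u v : norm2 (u - v) <= norm2 u + norm2 v.
Proof. by rewrite -(norm2N v) norm2D_le. Qed.

Lemma norm2_le_entries u v : (forall i, `|u i 0| <= `|v i 0|) -> norm2 u <= norm2 v.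
Proof.
move=> uv; rewrite ler_norm2; apply: ler_sum => i _.
rewrite -!expr2 -(real_normK (num_real (u i 0))) -(real_normK (num_real (v i 0))).
by rewrite lerXn2r ?nnegrE.
Qed.

Lemma normr_entry_le_norm2 v i : `|v i 0| <= norm2 v.
Proof.
rewrite -sqrtr_sqr norm2E ler_sqrt ?dot_self_ge0 // /dot (bigD1 i) //= expr2 lerDl.
by apply: sumr_ge0 => j _; rewrite -expr2 sqr_ge0.
Qed.

Lemma normr_entry_le_norminf v i : `|v i 0| <= norminf v.
Proof. by rewrite /norminf (bigD1 i) //= le_max lexx. Qed.

Lemma norminf_ge0 v : 0 <= norminf v.
Proof. by rewrite /norminf; elim/big_ind: _ => // a b a0 _; rewrite le_max a0. Qed.

Lemma norm2_delta i : norm2 (delta_mx i 0 : 'cV[R]_p) = 1.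
Proof.
rewrite norm2E /dot (bigD1 i) //= big1 ?addr0; first by rewrite mxE !eqxx mulr1 sqrtr1.
by move=> j ji; rewrite mxE (negbTE ji) mul0r.
Qed.

End Norm2.

Section Support.
Variables (R : realType) (p : nat).
Implicit Types (u v : 'cV[R]_p) (S : {set 'I_p}).

Lemma supp_add u v : supp (u + v) \subset supp u :|: supp v.
Proof.
apply/fintype.subsetP => i; rewrite !inE mxE; apply: contraR.
by rewrite negb_or !negbK => /andP[/eqP-> /eqP->]; rewrite addr0.
Qed.

Lemma supp_scale a v : supp (a *: v) \subset supp v.
Proof. by apply/fintype.subsetP => i; rewrite !inE mxE; apply: contraNneq => ->; rewrite mulr0. Qed.

Lemma suppN v : supp (- v) = supp v.
Proof. by apply/setP => i; rewrite !inE mxE oppr_eq0. Qed.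

Lemma supp_delta i : supp (delta_mx i 0 : 'cV[R]_p) = [set i].
Proof. by apply/setP => j; rewrite !inE mxE eqxx andbT pnatr_eq0 eqb0 negbK. Qed.

Lemma card_suppD u v : (#|supp (u + v)| <= #|supp u| + #|supp v|)%N.
Proof. exact: leq_trans (subset_leq_card (supp_add u v)) (leq_card_setU _ _).1. Qed.

Lemma supp_subset_eq0 S v i : supp v \subset S -> i \notin S -> v i 0 = 0.
Proof. by move=> vS; apply: contraNeq => vi; apply: (fintype.subsetP vS); rewrite inE. Qed.

Definition mask_col S v : 'cV[R]_p := \col_i (if i \in S then v i 0 else 0).

Lemma supp_mask_col S v : supp (mask_col S v) = S :&: supp v.
Proof. by apply/setP => i; rewrite !inE mxE; case: (i \in S); rewrite ?eqxx. Qed.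

Lemma norm2_mask_col_le S v : norm2 (mask_col S v) <= norm2 v.
Proof.
by apply: norm2_le_entries => i; rewrite mxE; case: ifP; rewrite ?normr0 ?normr_ge0.
Qed.

Lemma sub_mask_col S u v : supp u \subset S ->
  u - v = mask_col S (u - v) - mask_col (~: S) v.
Proof.
move=> uS; apply/matrixP => j b; rewrite ord1 !mxE inE.
by case: ifP => jS; rewrite ?subr0 // (supp_subset_eq0 uS) ?jS // sub0r.
Qed.

Lemma disjoint_supp_mask_colC S u v :
  [disjoint supp (mask_col S u) & supp (mask_col (~: S) v)].
Proof.
rewrite -setI_eq0; apply/eqP/setP => j; rewrite !supp_mask_col !inE.
by case: (j \in S); rewrite ?andbF.
Qed.

Lemma mask_col_setC1 v i : v = mask_col [set~ i] v + v i 0 *: delta_mx i 0.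
Proof.
apply/matrixP => j b; rewrite ord1 !mxE !inE eqxx andbT.
by case: eqP => [->|_]; rewrite ?mulr1 ?add0r ?mulr0 ?addr0.
Qed.

End Support.

Lemma sqr_norm2_mulmx_le (R : realType) m n (A : 'M[R]_(m, n)) (x : 'cV[R]_n) :
  norm2 (A *m x) ^+ 2 <= (\sum_a \sum_j A a j ^+ 2) * norm2 x ^+ 2.
Proof.
rewrite sqr_norm2 mulr_suml; apply: ler_sum => a _.
have -> : (A *m x) a 0 = dot (row a A)^T x.
  by rewrite mxE; apply: eq_bigr => j _; rewrite !mxE.
have -> : \sum_j A a j ^+ 2 = dot (row a A)^T (row a A)^T.
  by apply: eq_bigr => j _; rewrite !mxE expr2.
by rewrite sqr_norm2 sqr_dot_le.
Qed.

Section RIP.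
Variables (R : realType) (m n : nat) (A : 'M[R]_(m, n)).

Definition rip_admissible l := [set d : R | 0 <= d /\ forall x : 'cV[R]_n, sparse l x ->
  (1 - d) * norm2 x ^+ 2 <= norm2 (A *m x) ^+ 2 <= (1 + d) * norm2 x ^+ 2]%classic.

(* Any d exceeding the squared Frobenius norm of A is admissible. *)
Lemma rip_admissible_neq0 l : (rip_admissible l !=set0)%classic.
Proof.
set K := \sum_a \sum_j A a j ^+ 2.
have K0 : 0 <= K by do 2![apply: sumr_ge0 => ? _]; exact: sqr_ge0.
exists (K + 1); split => [|x _]; first by rewrite addr_ge0.
have := sqr_norm2_mulmx_le A x; rewrite -/K.
have := sqr_ge0 (norm2 x); have := sqr_ge0 (norm2 (A *m x)).
set a := norm2 x ^+ 2; set b := norm2 (A *m x) ^+ 2 => b0 a0 ba.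
by apply/andP; split; nra.
Qed.

Lemma rip_const_ge0 l : 0 <= rip_const A l.
Proof. by apply: lb_le_inf (rip_admissible_neq0 l) _ => d []. Qed.

Lemma le_rip_const l l' : (l <= l')%N -> rip_const A l <= rip_const A l'.
Proof.
move=> ll'; apply: lb_le_inf (rip_admissible_neq0 l') _ => d [d0 Hd].
apply: ge_inf; first by exists 0 => e [].
by split => // x sx; apply: Hd; exact: leq_trans ll'.
Qed.

Lemma rip_const_bounds l (x : 'cV[R]_n) : sparse l x ->
  (1 - rip_const A l) * dot x x <= dot (A *m x) (A *m x)
  <= (1 + rip_const A l) * dot x x.
Proof.
move=> sx; set q := dot x x; set r := dot (A *m x) (A *m x).
have [q0|q_neq0] := eqVneq q 0.
  by rewrite q0 /r (dot_self_eq0 q0) mulmx0 dot0l !mulr0 lexx.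
have q_gt0 : 0 < q by rewrite lt_def q_neq0 dot_self_ge0.
have ratio_bounds d : rip_admissible l d -> 1 - d <= r / q <= 1 + d.
  case=> _ /(_ x sx); rewrite !sqr_norm2 -/q -/r.
  by rewrite ler_pdivlMr // ler_pdivrMr.
have lo' : 1 - r / q <= rip_const A l.
  apply: lb_le_inf (rip_admissible_neq0 l) _ => d /ratio_bounds /andP[+ _]; lra.
have hi' : r / q - 1 <= rip_const A l.
  apply: lb_le_inf (rip_admissible_neq0 l) _ => d /ratio_bounds /andP[_ +]; lra.
by apply/andP; split; [rewrite -ler_pdivlMr | rewrite -ler_pdivrMr] => //; lra.
Qed.

Lemma norm2_mulmx_le l (x : 'cV[R]_n) : sparse l x ->
  norm2 (A *m x) <= Num.sqrt (1 + rip_const A l) * norm2 x.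
Proof.
move=> sx; have /andP[_ hi] := rip_const_bounds sx.
rewrite !norm2E -sqrtrM ?ler_sqrt //; last by rewrite addr_ge0 ?rip_const_ge0.
by rewrite mulr_ge0 ?dot_self_ge0 // addr_ge0 ?rip_const_ge0.
Qed.

Lemma rip_lower_norm2 l (x : 'cV[R]_n) : sparse l x ->
  Num.sqrt (1 - rip_const A l) * norm2 x <= norm2 (A *m x).
Proof.
move=> sx; have /andP[lo _] := rip_const_bounds sx.
have [d_le1|d_gt1] := lerP 0 (1 - rip_const A l).
  by rewrite !norm2E -sqrtrM // ler_sqrt ?dot_self_ge0.
by rewrite ler0_sqrtr ?mul0r ?norm2_ge0 // ltW.
Qed.

(* Polarization: compare |A(a u + v)|^2 and |A(a u - v)|^2 with a = |v| / |u|. *)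
Lemma rip_dot_disjoint_le l (u v : 'cV[R]_n) :
  [disjoint supp u & supp v] -> (#|supp u :|: supp v| <= l)%N ->
  dot (A *m u) (A *m v) <= rip_const A l * norm2 u * norm2 v.
Proof.
move=> duv luv; set d := rip_const A l.
have d0 : 0 <= d := rip_const_ge0 l.
have rhs0 : 0 <= d * norm2 u * norm2 v := mulr_ge0 (mulr_ge0 d0 (norm2_ge0 u)) (norm2_ge0 v).
have [u0|u0] := eqVneq u 0; first by rewrite u0 mulmx0 dot0l -u0.
have [v0|v0] := eqVneq v 0; first by rewrite v0 mulmx0 dot0r -v0.
set a := norm2 v / norm2 u.
have a_gt0 : 0 < a by rewrite divr_gt0 ?norm2_gt0.
have sparse_pm (w : 'cV[R]_n) : supp w = supp v -> sparse l (a *: u + w).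
  move=> wv; apply: leq_trans luv; apply: subset_leq_card.
  by rewrite (fintype.subset_trans (supp_add _ _)) // wv finset.setSU ?supp_scale.
have /andP[_ hi] := rip_const_bounds (sparse_pm v erefl).
have /andP[lo _] := rip_const_bounds (sparse_pm (- v) (suppN v)).
have uv0 : dot u v = 0.
  apply: dot_supp_eq0 => i ui; apply/eqP; apply: contraTT duv => vi.
  by apply/pred0Pn; exists i; rewrite /= !inE ui.
rewrite !mulmxDr mulmxN -!scalemxAr !(dotDl, dotDr, dotNl, dotNr, dotZl, dotZr) in hi lo.
rewrite -/d (dotC v u) uv0 (dotC (A *m v)) in hi lo.
have au : a * norm2 u = norm2 v by rewrite divfK // gt_eqF ?norm2_gt0.
have key : a * dot (A *m u) (A *m v) <= a * (d * norm2 u * norm2 v).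
  move: hi lo; rewrite -[dot u u]sqr_norm2 -[dot v v]sqr_norm2 -au.
  set X := dot (A *m u) (A *m v); set nu := norm2 u; nra.
by rewrite ler_pM2l in key.
Qed.

Lemma rip_dot_disjoint l (u v : 'cV[R]_n) :
  [disjoint supp u & supp v] -> (#|supp u :|: supp v| <= l)%N ->
  `|dot (A *m u) (A *m v)| <= rip_const A l * norm2 u * norm2 v.
Proof.
move=> duv luv; rewrite ler_norml rip_dot_disjoint_le // andbT lerNl.
by rewrite -dotNr -mulmxN -(norm2N v) rip_dot_disjoint_le ?suppN.
Qed.

End RIP.

Section Largest.
Variables (R : realType) (n : nat) (v : 'cV[R]_n).

Lemma ranks_above_irr i : ~~ ranks_above v i i.
Proof. by rewrite /ranks_above ltxx ltnn andbF. Qed.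

Lemma ranks_above_trans j i l :
  ranks_above v j i -> ranks_above v l j -> ranks_above v l i.
Proof.
rewrite /ranks_above => /orP[h1|/andP[/eqP e1 h1]] /orP[h2|/andP[/eqP e2 h2]].
- by rewrite (lt_trans h1 h2).
- by rewrite e2 h1.
- by rewrite -e1 h2.
- by rewrite e2 e1 eqxx (ltn_trans h1 h2) orbT.
Qed.

Lemma ranks_above_total i j : i != j -> ranks_above v j i || ranks_above v i j.
Proof.
move=> ij; rewrite /ranks_above.
have [||] := ltgtP `|v i 0| `|v j 0|; rewrite ?orbT //= => _.
by move: ij; rewrite -(inj_eq val_inj) neq_ltn.
Qed.

Let above i := [set j | ranks_above v j i].

(* [largest] is defined through the cardinal of a classical set; restate it with
   a finset. *)
Lemma in_largest k i : (i \in largest k v) = (#|above i| < k)%N.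
Proof.
rewrite inE; congr (_ < _)%N; apply: eq_card => j; rewrite inE.
by apply/idP/idP => [/set_mem|/mem_set].
Qed.

Lemma card_above_lt i j : ranks_above v j i -> (#|above j| < #|above i|)%N.
Proof.
move=> ji; apply: proper_card; apply/properP; split.
  by apply/fintype.subsetP => l; rewrite !inE; exact: ranks_above_trans.
by exists j; rewrite !inE // (negbTE (ranks_above_irr j)).
Qed.

(* Distinct members of largest k v have distinct ranks #|above i| < k. *)
Lemma card_largest k : (#|largest k v| <= k)%N.
Proof.
pose f i := #|above i|.
have f_inj : {in largest k v &, injective f}.
  move=> i j _ _ fij; apply/eqP; apply: contraT => ij.
  by case/orP: (ranks_above_total ij) => /card_above_lt; rewrite -/(f i) -/(f j) fij ltnn.
have := @uniq_leq_size _ (map f (enum (largest k v))) (iota 0 k).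
rewrite size_map size_iota -cardE; apply.
  by rewrite map_inj_in_uniq ?enum_uniq // => x y; rewrite !mem_enum; exact: f_inj.
by move=> x /mapP[i]; rewrite mem_enum in_largest => ik ->; rewrite mem_iota.
Qed.

Lemma largest_dominated k (S : {set 'I_n}) i :
  i \notin largest k v -> i \in S -> (#|S| <= k)%N ->
  exists2 j, j \notin S & `|v i 0| <= `|v j 0|.
Proof.
rewrite in_largest -leqNgt => ki iS Sk.
have : ~~ (above i \subset S :\ i).
  apply/negP => /subset_leq_card above_le.
  by move: (leq_trans Sk (leq_trans ki above_le)); rewrite (cardsD1 i S) iS add1n ltnn.
case/fintype.subsetPn => j; rewrite !inE => ji; rewrite negb_and negbK.
case/orP => [/eqP ij|jS]; first by rewrite ij (negbTE (ranks_above_irr i)) in ji.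
exists j => //; case/orP: ji => [/ltW //|/andP[/eqP-> _]] //.
Qed.

End Largest.

Section Estimator.
Variables (R : realType) (m n : nat) (A : 'M[R]_(m, n)) (S : {set 'I_n}).

Definition embed_col (z : 'cV[R]_#|S|) : 'cV[R]_n :=
  \col_i (\sum_(j < #|S|) if enum_val j == i then z j 0 else 0).

Lemma sea_estE y : sea_est A y S = embed_col (mp_pinv (colS A S) *m y).
Proof. by []. Qed.

Lemma embed_col_notin z i : i \notin S -> embed_col z i 0 = 0.
Proof.
move=> iS; rewrite mxE big1 // => j _; case: eqP => // ji.
by rewrite -ji enum_valP in iS.
Qed.

Lemma embed_col_enum_val z j : embed_col z (enum_val j) 0 = z j 0.
Proof.
rewrite mxE (bigD1 j) //= eqxx big1 ?addr0 // => l lj.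
by rewrite (inj_eq enum_val_inj) (negbTE lj).
Qed.

Lemma supp_embed_col z : supp (embed_col z) \subset S.
Proof.
apply/fintype.subsetP => i; rewrite inE; apply: contraR => iS.
by rewrite embed_col_notin.
Qed.

Lemma mulmx_embed_col z : A *m embed_col z = colS A S *m z.
Proof.
apply/matrixP => a b; rewrite ord1 !mxE.
under eq_bigr => i _ do rewrite mxE big_distrr /=.
rewrite exchange_big /=; apply: eq_bigr => j _; rewrite !mxE.
rewrite (bigD1 (enum_val j)) //= eqxx big1 ?addr0 // => i ij.
by rewrite eq_sym (negbTE ij) mulr0.
Qed.

Lemma dot_embed_col z : dot (embed_col z) (embed_col z) = dot z z.
Proof.
rewrite /dot (bigID (mem S)) /= [X in _ + X]big1 ?addr0; last first.
  by move=> i iS; rewrite embed_col_notin ?mul0r.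
by rewrite big_enum_val /=; apply: eq_bigr => j _; rewrite embed_col_enum_val.
Qed.

Lemma colS_mulmx_eq0 k (z : 'cV[R]_#|S|) : rip_const A k < 1 -> (#|S| <= k)%N ->
  colS A S *m z = 0 -> z = 0.
Proof.
move=> rip_k Sk Mz0; apply: dot_self_eq0; apply/eqP; rewrite eq_le dot_self_ge0 andbT.
have sz : sparse k (embed_col z).
  exact: leq_trans (subset_leq_card (supp_embed_col z)) Sk.
have /andP[lo _] := rip_const_bounds A sz.
rewrite mulmx_embed_col Mz0 dot0l dot_embed_col in lo.
by rewrite -(pmulr_rle0 _ (_ : 0 < 1 - rip_const A k)) // subr_gt0.
Qed.

(* When A_S is injective, (A_S^T A_S)^-1 A_S^T satisfies the Penrose conditions. *)
Lemma penrose_mp_pinv_colS k : rip_const A k < 1 -> (#|S| <= k)%N ->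
  penrose (colS A S) (mp_pinv (colS A S)).
Proof.
move=> rip_k Sk; set M := colS A S; set Q := M^T *m M.
have Qsym : Q^T = Q by rewrite /Q trmx_mul trmxK.
have Q_unit : Q \in unitmx.
  rewrite -row_free_unit -kermx_eq0; apply/eqP/row_matrixP => i; rewrite row0.
  set u := row i (kermx Q).
  have uQ : u *m Q = 0 by rewrite /u -row_mul mulmx_ker row0.
  apply: trmx_inj; rewrite trmx0; apply: (colS_mulmx_eq0 rip_k Sk).
  apply: dot_self_eq0; rewrite dot_mulmxl mulmxA -/Q -Qsym -trmx_mul uQ trmx0.
  exact: dot0r.
suff ex_pinv : exists B, penrose M B by exact: (xgetPex 0 ex_pinv).
exists (invmx Q *m M^T); split.
- by rewrite -!mulmxA -/Q mulVmx // mulmx1.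
- by rewrite -(mulmxA (invmx Q)) -/Q mulVmx // mul1mx.
- by rewrite !trmx_mul trmxK trmx_inv Qsym mulmxA.
- by rewrite -mulmxA -/Q mulVmx // trmx1.
Qed.

Lemma sea_est_notin y i : i \notin S -> sea_est A y S i 0 = 0.
Proof. exact: embed_col_notin. Qed.

Lemma sea_est_normal k y j : rip_const A k < 1 -> (#|S| <= k)%N -> j \in S ->
  (A^T *m (A *m sea_est A y S - y)) j 0 = 0.
Proof.
move=> rip_k Sk jS; set M := colS A S.
have [MBM _ MB_sym _] := penrose_mp_pinv_colS rip_k Sk.
have normal : M^T *m (M *m mp_pinv M) = M^T by rewrite -MB_sym -trmx_mul MBM.
have -> : j = enum_val (enum_rank_in jS j) by rewrite enum_rankK_in.
have -> : (A^T *m (A *m sea_est A y S - y)) (enum_val (enum_rank_in jS j)) 0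
        = (M^T *m (A *m sea_est A y S - y)) (enum_rank_in jS j) 0.
  by rewrite !mxE; apply: eq_bigr => a _; rewrite !mxE.
by rewrite sea_estE mulmx_embed_col mulmxBr !mulmxA -(mulmxA M^T) normal subrr mxE.
Qed.

Lemma sea_est_residual_le k y (v : 'cV[R]_n) :
  rip_const A k < 1 -> (#|S| <= k)%N -> supp v \subset S ->
  dot (A *m sea_est A y S - y) (A *m sea_est A y S - y)
  <= dot (A *m v - y) (A *m v - y).
Proof.
move=> rip_k Sk vS; set x := sea_est A y S.
have -> : A *m v - y = (A *m x - y) + A *m (v - x) by rewrite mulmxBr [RHS]addrC addrA subrK.
have orth : dot (A *m (v - x)) (A *m x - y) = 0.
  rewrite dot_mulmxl; apply: dot_supp_eq0 => j vxj.
  apply: (sea_est_normal _ rip_k Sk); apply: contraR vxj => jS.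
  by rewrite 2!mxE (supp_subset_eq0 vS) // /x sea_est_notin // subrr.
rewrite [leRHS]dot_sqrD (dotC (A *m x - y)) orth mulr0 addr0 lerDl; exact: dot_self_ge0.
Qed.

End Estimator.

Lemma min_abs_supp_ge0 (R : realType) n (v : 'cV[R]_n) : 0 <= min_abs_supp v.
Proof.
have [[i vi]|] := pselect (exists i, i \in supp v).
  by apply: lb_le_inf => [|_ [j _ <-]] //; exists `|v i 0|, i.
move=> /forallNP supp0; rewrite /min_abs_supp.
suff -> : [set `|v i 0| | i in [set i | i \in supp v]]%classic = set0 by rewrite inf0.
by apply/seteqP; split => // _ [i /= vi _]; exact: (supp0 i).
Qed.

Lemma min_abs_supp_le (R : realType) n (v : 'cV[R]_n) i :
  i \in supp v -> min_abs_supp v <= `|v i 0|.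
Proof. by move=> vi; apply: ge_inf; [exists 0 => _ [j _ <-] | exists i]. Qed.

Section LeastSquaresError.
Variables (R : realType) (m n k : nat) (A : 'M[R]_(m, n)).
Variables (xs : 'cV[R]_n) (e y : 'cV[R]_m).
Hypothesis y_def : y = A *m xs + e.
Hypothesis xs_sparse : sparse k xs.
Hypothesis rip_2k1 : rip_const A (2 * k).+1 < 1.

Let d1 := rip_const A k.
Let d2 := rip_const A (2 * k).
Let d3 := rip_const A (2 * k).+1.

Lemma rip_k_lt1 : d1 < 1.
Proof. by apply: le_lt_trans rip_2k1; apply: le_rip_const; lia. Qed.

Lemma rip_2k_lt1 : d2 < 1.
Proof. by apply: le_lt_trans rip_2k1; apply: le_rip_const. Qed.

Lemma alphaRIP_ge0 : 0 <= alphaRIP A k.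
Proof.
have d1_lt1 := rip_k_lt1.
by rewrite mulr_ge0 ?rip_const_ge0 // addr_ge0 // divr_ge0 ?rip_const_ge0 // subr_ge0 ltW.
Qed.

Lemma gammaRIP_ge0 : 0 <= gammaRIP A k.
Proof.
have d1_lt1 := rip_k_lt1.
by rewrite addr_ge0 // divr_ge0 ?mulr_ge0 ?rip_const_ge0 ?sqrtr_ge0 // subr_ge0 ltW.
Qed.

Section OnSupport.
Variables (S : {set 'I_n}) (x : 'cV[R]_n).
Hypotheses (card_S : (#|S| <= k)%N) (supp_x : supp x \subset S).
Hypothesis normal_x : forall j, j \in S -> (A^T *m (A *m x - y)) j 0 = 0.

(* The error x - xs splits as w - z with w supported on S and z = xs off S; the
   normal equations make A w orthogonal to the residual A w - A z - e. *)
Lemma ls_masked_error_le :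
  (1 - d1) * norm2 (mask_col S (x - xs))
  <= d2 * norm2 (mask_col (~: S) xs) + Num.sqrt (1 + d1) * norm2 e.
Proof.
set w := mask_col S (x - xs); set z := mask_col (~: S) xs.
have res : A *m x - y = A *m w - A *m z - e.
  by rewrite -mulmxBr -(sub_mask_col _ supp_x) y_def mulmxBr opprD addrA.
have wS : supp w \subset S by rewrite supp_mask_col subsetIl.
have sw : sparse k w := leq_trans (subset_leq_card wS) card_S.
have card_wz : (#|supp w :|: supp z| <= 2 * k)%N.
  apply: leq_trans (leq_card_setU _ _).1 _; rewrite mul2n -addnn leq_add //.
  by apply: leq_trans xs_sparse; rewrite subset_leq_card // supp_mask_col subsetIr.
have orth : dot (A *m w) (A *m x - y) = 0.
  rewrite dot_mulmxl; apply: dot_supp_eq0 => j wj.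
  by apply: normal_x; apply: (fintype.subsetP wS); rewrite inE.
have /andP[lo _] := rip_const_bounds A sw.
have Awz : dot (A *m w) (A *m z) <= d2 * norm2 w * norm2 z.
  exact: le_trans (ler_norm _) (rip_dot_disjoint A (disjoint_supp_mask_colC _ _ _) card_wz).
set s := Num.sqrt (1 + d1).
have Awe : dot (A *m w) e <= s * norm2 w * norm2 e.
  apply: le_trans (ler_norm _) (le_trans (normr_dot_le _ _) _).
  by rewrite ler_wpM2r ?norm2_ge0 ?norm2_mulmx_le.
rewrite res !dotBr -!sqr_norm2 -/d1 in orth lo.
have d20 : 0 <= d2 := rip_const_ge0 A _.
have [w0|w_neq0] := eqVneq (norm2 w) 0.
  by rewrite w0 mulr0 addr_ge0 // mulr_ge0 ?sqrtr_ge0 ?norm2_ge0.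
have w_gt0 : 0 < norm2 w by rewrite lt_def w_neq0 norm2_ge0.
rewrite -(ler_pM2l w_gt0); nra.
Qed.

Lemma ls_error_le :
  d3 * norm2 (xs - x) <= alphaRIP A k * norm2 xs + (gammaRIP A k - 1) * norm2 e.
Proof.
have := ls_masked_error_le; set w := mask_col S (x - xs); set z := mask_col (~: S) xs.
set s := Num.sqrt (1 + d1) => w_le.
have d1_lt1 := rip_k_lt1; have d20 : 0 <= d2 := rip_const_ge0 A _.
have -> : alphaRIP A k * norm2 xs + (gammaRIP A k - 1) * norm2 e
    = d3 * (norm2 xs + (d2 * norm2 xs + s * norm2 e) / (1 - d1)).
  by rewrite /alphaRIP /gammaRIP -/d1 -/d2 -/d3 -/s; field; rewrite subr_eq0 gt_eqF.
apply: ler_wpM2l; first exact: rip_const_ge0.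
have rE : xs - x = z - w by rewrite -opprB (sub_mask_col _ supp_x) opprB.
rewrite rE; apply: le_trans (norm2B_le _ _) (lerD (norm2_mask_col_le _ _) _).
rewrite ler_pdivlMr ?subr_gt0 // mulrC (le_trans w_le) // lerD2r ler_wpM2l //.
exact: norm2_mask_col_le.
Qed.

End OnSupport.

Lemma norm2_error_le_of_residual l (x : 'cV[R]_n) :
  rip_const A l < 1 -> sparse l (x - xs) ->
  dot (A *m x - y) (A *m x - y) <= dot e e ->
  norm2 (x - xs) <= 2 / Num.sqrt (1 - rip_const A l) * norm2 e.
Proof.
move=> rip_l sd res_le; rewrite -ler_norm2 in res_le.
have Ad : A *m (x - xs) = (A *m x - y) + e by rewrite y_def mulmxBr opprD addrA subrK.
have := norm2D_le (A *m x - y) e; rewrite -Ad => Ad_le.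
have := rip_lower_norm2 A sd; have s_gt0 : 0 < Num.sqrt (1 - rip_const A l).
  by rewrite sqrtr_gt0 subr_gt0.
by rewrite mulrAC ler_pdivlMr // mulrC; lra.
Qed.

Lemma supp_recovery (S : {set 'I_n}) (x : 'cV[R]_n) :
  (#|S| <= k)%N -> supp x \subset S -> dot (A *m x - y) (A *m x - y) <= dot e e ->
  2 / Num.sqrt (1 - d2) * norm2 e < min_abs_supp xs ->
  supp xs \subset S /\ norm2 (x - xs) <= 2 / Num.sqrt (1 - d1) * norm2 e.
Proof.
move=> Sk xS res_le mu_gt.
have xsS : supp xs \subset S.
  apply/fintype.subsetP => i xsi; apply: contraT => iS.
  have s2k : sparse (2 * k) (x - xs).
    apply: leq_trans (card_suppD _ _) _; rewrite suppN mul2n -addnn leq_add //.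
    exact: leq_trans (subset_leq_card xS) Sk.
  have := norm2_error_le_of_residual rip_2k_lt1 s2k res_le.
  have := normr_entry_le_norm2 (x - xs) i; rewrite !mxE (supp_subset_eq0 xS) // sub0r normrN.
  have := min_abs_supp_le xsi; lra.
split => //; apply: norm2_error_le_of_residual rip_k_lt1 _ res_le.
apply: leq_trans Sk; apply: subset_leq_card.
by rewrite (fintype.subset_trans (supp_add _ _)) // finset.subUset suppN xS.
Qed.

Hypothesis col_norm : forall i : 'I_n, norm2 (col i A) = 1.

(* Split r = xs - x into its coordinate i, which A_i^T A returns exactly since
   |A_i| = 1, and a part whose support is disjoint from {i}. *)
Lemma residual_entry_le (x : 'cV[R]_n) i : sparse k x -> x i 0 = 0 ->
  `|(A^T *m (A *m x - y)) i 0 + xs i 0| <= d3 * norm2 (xs - x) + norm2 e.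
Proof.
move=> sx xi; set r := xs - x; set r' := mask_col [set~ i] r.
have ri : r i 0 = xs i 0 by rewrite !mxE xi subr0.
have rE : r = r' + xs i 0 *: delta_mx i 0 by rewrite -ri -mask_col_setC1.
have coord : (A^T *m (A *m x - y)) i 0 + xs i 0
    = - dot (A *m delta_mx i 0) (A *m r') - dot (col i A) e.
  have -> : A *m x - y = - (A *m r) - e by rewrite y_def mulmxBr opprB opprD addrA.
  rewrite trmx_mul_entry dotBr dotNr rE mulmxDr -scalemxAr dotDr dotZr -colE.
  by rewrite -sqr_norm2 col_norm expr1n mulr1; ring.
have card_dr : (#|supp (delta_mx i 0%R : 'cV[R]_n) :|: supp r'| <= (2 * k).+1)%N.
  rewrite supp_delta; apply: leq_trans (leq_card_setU _ _).1 _; rewrite cards1 add1n ltnS.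
  apply: leq_trans (subset_leq_card (_ : _ \subset supp r)) _.
    by rewrite supp_mask_col subsetIr.
  by rewrite mul2n -addnn; apply: leq_trans (card_suppD _ _) _; rewrite suppN leq_add.
have disj : [disjoint supp (delta_mx i 0 : 'cV[R]_n) & supp r'].
  by rewrite supp_delta disjoints1 supp_mask_col !inE eqxx.
have := rip_dot_disjoint A disj card_dr; rewrite norm2_delta mulr1 -/d3 => h1.
have := normr_dot_le (col i A) e; rewrite col_norm mul1r => h2.
have h3 : d3 * norm2 r' <= d3 * norm2 r by rewrite ler_wpM2l ?rip_const_ge0 ?norm2_mask_col_le.
rewrite coord; apply: le_trans (ler_normB _ _) _; rewrite normrN; lra.
Qed.

Lemma sea_est_step_le (S : {set 'I_n}) i : (#|S| <= k)%N -> i \notin S ->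
  `|(A^T *m (A *m sea_est A y S - y)) i 0 + xs i 0|
  <= alphaRIP A k * norm2 xs + gammaRIP A k * norm2 e.
Proof.
move=> Sk iS; have xS := supp_embed_col (mp_pinv (colS A S) *m y).
have := ls_error_le Sk xS (fun j => sea_est_normal y rip_k_lt1 Sk).
have := residual_entry_le (leq_trans (subset_leq_card xS) Sk) (sea_est_notin A y iS).
lra.
Qed.

End LeastSquaresError.

Lemma pigeonhole_count (T : finType) (P : {set T}) (bad : T -> nat -> bool) L :
  (0 < L)%N -> (forall t, (t < L)%N -> exists2 i, i \in P & bad i t) ->
  exists2 i, i \in P & (L <= #|P| * \sum_(t < L) bad i t)%N.
Proof.
move=> L_gt0 all_bad; pose cnt i := (\sum_(t < L) bad i t)%N.
have P_gt0 : (0 < #|P|)%N by have [i iP _] := all_bad 0%N L_gt0; apply/card_gt0P; exists i.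
have [i iP cnt_max] := eq_bigmax_cond cnt P_gt0.
exists i => //; rewrite -/(cnt i) -cnt_max -sum_nat_const.
apply: leq_trans (_ : \sum_(j in P) cnt j <= _)%N; last first.
  by apply: leq_sum => j jP; exact: leq_bigmax_cond.
rewrite /cnt exchange_big /= -[X in (X <= _)%N]card_ord -sum1_card.
apply: leq_sum => t _; have [j jP bad_jt] := all_bad t (ltn_ord t).
by rewrite (bigD1 j) //= bad_jt.
Qed.

(* Solves for L the growth inequality of a coordinate missed N >= L / K times
   during the first L steps. *)
Lemma time_bound_of_growth (R : realFieldType) (K L N eta c mu M : R) :
  1 <= K -> 0 < eta -> 0 <= c -> 0 < mu - 2 * K * c -> 0 <= M -> 0 <= L -> L <= N * K ->
  - M + (N - 1) * (eta * (mu - c)) <= M + (L - 1) * (eta * c) ->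
  L * (mu - 2 * K * c) <= 2 * K * (M / eta) + (K + 1) * mu.
Proof.
move=> K1 eta_gt0 c0 D0 M0 L0 LN h.
have MeE : M = M / eta * eta by rewrite divfK // gt_eqF.
have h' : (N - 1) * (mu - c) <= 2 * (M / eta) + (L - 1) * c.
  rewrite -(ler_pM2l eta_gt0); move: h; rewrite {1 2}MeE; lra.
have := ler_wpM2l (le_trans ler01 K1) h'.
have : L * (mu - c) <= N * K * (mu - c) by rewrite ler_wpM2r // subr_ge0; nra.
have : 0 <= (K - 1) * (L * c) by rewrite !mulr_ge0 // subr_ge0.
set Me := M / eta; have Me0 : 0 <= Me by rewrite divr_ge0 // ltW.
nra.
Qed.

Section Iteration.
Variables (R : realType) (m n k : nat) (A : 'M[R]_(m, n)).
Variables (xs : 'cV[R]_n) (e y : 'cV[R]_m) (X0 : 'cV[R]_n) (eta : R).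
Hypothesis y_def : y = A *m xs + e.
Hypothesis xs_sparse : sparse k xs.
Hypothesis rip_2k1 : rip_const A (2 * k).+1 < 1.
Hypothesis col_norm : forall i : 'I_n, norm2 (col i A) = 1.
Hypothesis eta_gt0 : 0 < eta.

Let X t := sea_X A y k eta X0 t.
Let S t := sea_S A y k eta X0 t.
Let c := alphaRIP A k * norm2 xs + gammaRIP A k * norm2 e.
Let M := norminf X0.
Let mu := min_abs_supp xs.
Let T := ((2 * k)%:R * (M / eta) + (k.+1)%:R * mu) / (mu - (2 * k)%:R * c).

Lemma step_bound_ge0 : 0 <= c.
Proof.
by rewrite addr_ge0 // mulr_ge0 ?norm2_ge0 ?alphaRIP_ge0 ?gammaRIP_ge0.
Qed.

Lemma sea_X_succ_entry t i :
  X t.+1 i 0 = X t i 0 - eta * (A^T *m (A *m sea_est A y (S t) - y)) i 0.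
Proof. by rewrite /X /= !mxE. Qed.

Lemma sea_X_succ_in t i : i \in S t -> X t.+1 i 0 = X t i 0.
Proof.
move=> iS; rewrite sea_X_succ_entry.
by rewrite (sea_est_normal _ (rip_k_lt1 rip_2k1) (card_largest _ _) iS) mulr0 subr0.
Qed.

Lemma sea_X_succ_notin t i : i \notin S t ->
  `|X t.+1 i 0 - X t i 0 - eta * xs i 0| <= eta * c.
Proof.
move=> iS; rewrite sea_X_succ_entry.
have := sea_est_step_le y_def xs_sparse rip_2k1 col_norm (card_largest (X t) k) iS.
set g := (A^T *m _) i 0 => g_le.
rewrite (_ : _ - _ - _ = - (eta * (g + xs i 0))); last by ring.
by rewrite normrN normrM gtr0_norm // ler_wpM2l // ltW.
Qed.

Lemma sea_X_off_supp_le j t : j \notin supp xs -> `|X t j 0| <= M + t%:R * (eta * c).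
Proof.
rewrite inE negbK => /eqP xsj.
elim: t => [|t IH]; first by rewrite mul0r addr0 normr_entry_le_norminf.
rewrite -natr1 mulrDl mul1r addrA; apply: le_trans (lerD IH (lexx _)).
have [jS|jS] := boolP (j \in S t).
  by rewrite sea_X_succ_in // lerDl mulr_ge0 ?step_bound_ge0 // ltW.
have := sea_X_succ_notin jS; rewrite xsj mulr0 subr0 => step.
by rewrite -[X t.+1 j 0](subrK (X t j 0)) (le_trans (ler_normD _ _)) // addrC lerD2l.
Qed.

Definition progress i t := Num.sg (xs i 0) * X t i 0.

Lemma normr_progress_le i t : `|progress i t| <= `|X t i 0|.
Proof. by rewrite normrM normr_sg; case: (_ != 0); rewrite ?mul1r ?mul0r ?normr_ge0. Qed.

Lemma progress_succ_in i t : i \in S t -> progress i t.+1 = progress i t.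
Proof. by move=> iS; rewrite /progress sea_X_succ_in. Qed.

Lemma progress_succ_notin i t : i \in supp xs -> i \notin S t ->
  progress i t + eta * (mu - c) <= progress i t.+1.
Proof.
move=> xsi iS; have := sea_X_succ_notin iS.
set D := _ - _ - _ => D_le.
have -> : progress i t.+1 = progress i t + Num.sg (xs i 0) * D + eta * `|xs i 0|.
  by rewrite /progress /D normrEsg; ring.
have : `|Num.sg (xs i 0) * D| <= eta * c.
  by apply: le_trans D_le; rewrite normrM normr_sg; case: (_ != 0); rewrite ?mul1r ?mul0r.
rewrite ler_norml => /andP[sD _].
have : eta * mu <= eta * `|xs i 0| by rewrite ler_pM2l // min_abs_supp_le.
lra.
Qed.

(* A missed coordinate of the support is dominated by a coordinate off the support. *)
Lemma progress_notin_le i t : i \in supp xs -> i \notin S t ->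
  progress i t <= M + t%:R * (eta * c).
Proof.
move=> xsi iS; have [j xsj Xij] := largest_dominated iS xsi xs_sparse.
apply: le_trans (ler_norm _) (le_trans (normr_progress_le i t) _).
exact: le_trans Xij (sea_X_off_supp_le t xsj).
Qed.

Definition miss_count i L := (\sum_(t < L) (i \notin S t))%N.

Lemma progress_growth i L : i \in supp xs ->
  progress i 0 + (miss_count i L)%:R * (eta * (mu - c)) <= progress i L.
Proof.
move=> xsi; elim: L => [|L IH]; first by rewrite /miss_count big_ord0 mul0r addr0.
rewrite /miss_count big_ord_recr /= -/(miss_count i L).
have [iS|iS] := boolP (i \in S L); first by rewrite addn0 progress_succ_in.
rewrite addn1 -natr1 mulrDl mul1r addrA.
exact: le_trans (lerD IH (lexx _)) (progress_succ_notin xsi iS).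
Qed.

Lemma progress_last_miss i L : i \in supp xs -> (0 < miss_count i L)%N ->
  progress i 0 + ((miss_count i L)%:R - 1) * (eta * (mu - c))
  <= M + (L%:R - 1) * (eta * c).
Proof.
move=> xsi; elim: L => [|L IH]; first by rewrite /miss_count big_ord0.
rewrite /miss_count big_ord_recr /= -/(miss_count i L) -natr1 addrK.
have ec0 : 0 <= eta * c by rewrite mulr_ge0 ?step_bound_ge0 // ltW.
have [iS|iS] := boolP (i \in S L).
  by rewrite addn0 => /IH /le_trans; apply; rewrite lerD2l ler_wpM2r // lerBlDr lerDl.
rewrite addn1 -natr1 addrK => _.
exact: le_trans (progress_growth L xsi) (progress_notin_le xsi iS).
Qed.

Lemma sea_missed_time_le L : (0 < k)%N -> (2 * k)%:R * c < mu -> (0 < L)%N ->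
  (forall t, (t < L)%N -> ~~ (supp xs \subset S t)) -> L%:R <= T.
Proof.
rewrite /T natrM -[(k.+1)%:R]natr1 => k_gt0 D_gt0 L_gt0 all_missed.
have K1 : 1 <= k%:R :> R by rewrite ler1n.
have M0 : 0 <= M := norminf_ge0 X0.
rewrite -subr_gt0 in D_gt0.
have bad t : (t < L)%N -> exists2 i, i \in supp xs & i \notin S t.
  by move/all_missed/fintype.subsetPn => [i]; exists i.
have [i xsi] := pigeonhole_count L_gt0 bad; rewrite -/(miss_count i L) => L_le.
have cnt_gt0 : (0 < miss_count i L)%N.
  by rewrite lt0n; apply: contraTneq L_le => ->; rewrite muln0 -ltnNge.
have LN : L%:R <= (miss_count i L)%:R * k%:R :> R.
  by rewrite -natrM ler_nat mulnC (leq_trans L_le) // leq_mul2r xs_sparse orbT.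
have p0 : - M <= progress i 0.
  have := normr_progress_le i 0; rewrite ler_norml => /andP[+ _]; apply: le_trans.
  by rewrite lerN2; exact: normr_entry_le_norminf.
have := progress_last_miss xsi cnt_gt0 => last_miss.
rewrite ler_pdivlMr //.
by apply: time_bound_of_growth K1 eta_gt0 step_bound_ge0 D_gt0 M0 (ler0n _ L) LN _; lra.
Qed.

Lemma sea_supp_found : (0 < k)%N -> (2 * k)%:R * c < mu ->
  exists ts : nat, ts%:R <= T /\ supp xs \subset S ts.
Proof.
move=> k_gt0 D_gt0; pose L := (Num.truncn T).+1.
have T0 : 0 <= T.
  have M0 : 0 <= M := norminf_ge0 X0; have mu0 : 0 <= mu := min_abs_supp_ge0 xs.
  apply: divr_ge0; last by rewrite subr_ge0 ltW.
  by rewrite addr_ge0 // mulr_ge0 // divr_ge0 // ltW.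
have [/existsP[t good]|/existsPn all_missed] := boolP [exists t : 'I_L, supp xs \subset S t].
  by exists t; split => //; rewrite -truncn_ge_nat // -ltnS.
have := sea_missed_time_le k_gt0 D_gt0 (ltn0Sn _) (fun t tL => all_missed (Ordinal tL)).
by move/(lt_le_trans (truncnS_gt T)); rewrite ltxx.
Qed.

End Iteration.

Theorem theorem4p1 (R : realType) (m n k : nat) (A : 'M[R]_(m, n))
  (xs : 'cV[R]_n) (e : 'cV[R]_m) (y : 'cV[R]_m) :
  (0 < m)%N -> (0 < n)%N -> (0 < k)%N ->
  (1 <= #|supp xs| <= k)%N ->
  y = A *m xs + e ->
  ((2 * k).+1 <= n)%N ->
  rip_const A (2 * k).+1 < 1 ->
  (forall i : 'I_n, norm2 (col i A) = 1) ->
  gammaRIP A k * norm2 e < min_abs_supp xs / (2 * k)%:R - alphaRIP A k * norm2 xs ->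
  forall (X0 : 'cV[R]_n) (eta : R), 0 < eta ->
  let T := ((2 * k)%:R * (norminf X0 / eta) + (k.+1)%:R * min_abs_supp xs) /
           (min_abs_supp xs - (2 * k)%:R * (alphaRIP A k * norm2 xs + gammaRIP A k * norm2 e)) in
    (exists ts : nat, ts%:R <= T /\ supp xs \subset sea_S A y k eta X0 ts) /\
    (min_abs_supp xs > 2 / Num.sqrt (1 - rip_const A (2 * k)) * norm2 e ->
     forall N : nat, N%:R > T ->
     forall tb : nat, is_tbest A y k eta X0 N tb ->
       supp xs \subset sea_S A y k eta X0 tb /\
       norm2 (sea_x A y k eta X0 tb - xs) <= 2 / Num.sqrt (1 - rip_const A k) * norm2 e).
Proof.
move=> _ _ k_gt0 /andP[_ xs_sparse] y_def _ rip_2k1 col_norm gap X0 eta eta_gt0 T.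
have time_pos : (2 * k)%:R * (alphaRIP A k * norm2 xs + gammaRIP A k * norm2 e)
    < min_abs_supp xs.
  have : alphaRIP A k * norm2 xs + gammaRIP A k * norm2 e < min_abs_supp xs / (2 * k)%:R.
    by lra.
  by rewrite ltr_pdivlMr ?ltr0n ?muln_gt0 // mulrC.
have [ts [ts_le supp_ts]] :=
  sea_supp_found X0 y_def xs_sparse rip_2k1 col_norm eta_gt0 k_gt0 time_pos.
split; first by exists ts.
move=> mu_gt N N_gt tb [_ tb_min].
have ts_lt : (ts < N)%N by rewrite -(ltr_nat R) (le_lt_trans ts_le N_gt).
have res_ts := sea_est_residual_le y (rip_k_lt1 rip_2k1) (card_largest _ _) supp_ts.
have xs_res : A *m xs - y = - e by rewrite y_def opprD addrA subrr add0r.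
rewrite xs_res dotNl dotNr opprK -ler_norm2 in res_ts.
have := le_trans (tb_min ts ts_lt) res_ts; rewrite ler_norm2 => res_tb.
by have [] := supp_recovery y_def xs_sparse rip_2k1 (card_largest _ _) (supp_embed_col _) res_tb mu_gt.
Qed.
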